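(* Let $g=\frac{\sqrt5-1}2$, $g\le\alpha<\beta\le1$, $(x,y)\in\Omega_\alpha$, $(\tilde x,\tilde y)\in S(x,y)$, and $(x_n,y_n)=\mathcal T_\alpha^n(x,y)$ for some $n\ge1$. If $\tilde x\in[\beta-1,\beta)$ and $y_n<1-\frac1{\sqrt2}$, then there is some $k\ge1$ such that $\mathcal T_\beta^k(\tilde x,\tilde y)\in S(x_n,y_n)$.
   Context: For $\alpha\in[\tfrac12,1]$: $T_\alpha(x)=\frac1x-\lfloor\frac1x+1-\alpha\rfloor$ on $[\alpha-1,\alpha)\setminus\{0\}$, $T_\alpha(0)=0$; $\mathcal T_\alpha(x,y)=\left(T_\alpha(x),\frac{1}{y+\lfloor\frac1x+1-\alpha\rfloor}\right)$ for $x\ne0$, $\mathcal T_\alpha(0,y)=(0,0)$; $\Omega_\alpha=\bigcup_{n\ge0}\overline{\mathcal T_\alpha^n([\alpha-1,\alpha)\times\{0\})}$. For a point $(x,y)$, $S(x,y)=\{(x,y),(-x,-y),(x+1,\frac{y}{1-y}),(1-x,\frac{-y}{y+1})\}$. *)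

From Stdlib Require Import Reals.
Open Scope R_scope.

(* floor function: Int_part r = up r - 1 is the greatest integer <= r *)
Definition floorR (r : R) : R := IZR (Int_part r).

Definition digit (alpha x : R) : R := floorR (/ x + 1 - alpha).

Definition T (alpha x : R) : R :=
  if Req_EM_T x 0 then 0 else / x - digit alpha x.

Definition TT (alpha : R) (p : R * R) : R * R :=
  let (x, y) := p in
  if Req_EM_T x 0 then (0, 0)
  else (T alpha x, / (y + digit alpha x)).

Definition TTn (alpha : R) (n : nat) (p : R * R) : R * R :=
  Nat.iter n (TT alpha) p.

(* closure in R^2 (sup-norm balls; same topology as Euclidean) *)
Definition closure2 (A : R * R -> Prop) (p : R * R) : Prop :=
  forall eps, eps > 0 -> exists q, A q /\
    Rabs (fst q - fst p) < eps /\ Rabs (snd q - snd p) < eps.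

Definition image_n (alpha : R) (n : nat) (p : R * R) : Prop :=
  exists x0, alpha - 1 <= x0 < alpha /\ p = TTn alpha n (x0, 0).

Definition Omega (alpha : R) (p : R * R) : Prop :=
  exists n : nat, closure2 (image_n alpha n) p.

Definition S (p : R * R) (q : R * R) : Prop :=
  let (x, y) := p in
  q = (x, y) \/ q = (- x, - y) \/ q = (x + 1, y / (1 - y)) \/
  q = (1 - x, - y / (y + 1)).

Definition g : R := (sqrt 5 - 1) / 2.

(* Every point of [Omega a] lies in a closed, [TT a]-invariant region (the [envelope]) on
   which [y + digit a x] never vanishes.  For p there and q in S(p) in the domain of [TT b],
   explicit Moebius identities show that one or two [TT b]-steps from q land in S(TT a p);
   the only exception is a digit 1 or 2 step of [TT a], after which the second coordinate is
   at least 1 - 1/sqrt 2 and one lands in S(TT a (TT a p)) instead.  Following the orbit,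
   only times with second coordinate >= 1 - 1/sqrt 2 are skipped, which y_n excludes. *)

From Stdlib Require Import Reals Lra Lia Classical.
Open Scope R_scope.

Lemma digit_eq a x z : IZR z <= / x + 1 - a < IZR z + 1 -> digit a x = IZR z.
Proof.
  intros Hz. unfold digit, floorR. rewrite <- (Int_part_spec _ z); [reflexivity | lra].
Qed.

Lemma digit_spec a x : digit a x <= / x + 1 - a < digit a x + 1.
Proof. unfold digit, floorR. destruct (base_Int_part (/ x + 1 - a)). lra. Qed.

Lemma digit_integer a x : exists z : Z, digit a x = IZR z.
Proof. now exists (Int_part (/ x + 1 - a)). Qed.

Lemma TT_neq0 a x y : x <> 0 -> TT a (x, y) = (/ x - digit a x, / (y + digit a x)).
Proof. intros Hx. unfold TT, T. now destruct (Req_EM_T x 0). Qed.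

Lemma TT_0 a y : TT a (0, y) = (0, 0).
Proof. unfold TT. now destruct (Req_EM_T 0 0). Qed.

Lemma TTn_S a n p : TTn a (1 + n) p = TT a (TTn a n p).
Proof. reflexivity. Qed.

Lemma TTn_add a m n p : TTn a (m + n) p = TTn a m (TTn a n p).
Proof. apply Nat.iter_add. Qed.

Lemma fst_TTn_range b k p : 0 < b <= 1 -> (1 <= k)%nat -> b - 1 <= fst (TTn b k p) < b.
Proof.
  intros Hb Hk. destruct k as [|k]; [lia|]. rewrite TTn_S.
  destruct (TTn b k p) as [x y]. destruct (Req_dec x 0) as [->|Hx].
  - rewrite TT_0. simpl. lra.
  - rewrite TT_neq0 by exact Hx. simpl. pose proof (digit_spec b x). lra.
Qed.

Lemma golden_bounds a : g <= a -> 3 / 5 < a /\ 1 <= a * (a + 1).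
Proof.
  unfold g. intros Ha. pose proof (sqrt_sqrt 5 ltac:(lra)). pose proof (sqrt_pos 5).
  split; nra.
Qed.

Lemma sqrt2_bounds : sqrt 2 * sqrt 2 = 2 /\ 141 / 100 < sqrt 2 < 142 / 100.
Proof.
  pose proof (sqrt_sqrt 2 ltac:(lra)). pose proof (sqrt_pos 2). split; [auto | split; nra].
Qed.

(* Both sides vanish when [u = 1]. *)
Lemma inv_pred_eq u : u <> 0 -> / (u - 1) = / u / (1 - / u).
Proof.
  intros Hu. destruct (Req_dec u 1) as [->|Hu1].
  - unfold Rdiv. rewrite Rinv_1, Rminus_diag, Rinv_0. ring.
  - field. split; [exact Hu | lra].
Qed.

(* Both sides vanish when [u = -1]. *)
Lemma inv_opp_pred_eq u : u <> 0 -> / (- u - 1) = - / u / (/ u + 1).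
Proof.
  intros Hu. destruct (Req_dec u (-1)) as [->|Hu1].
  - replace (- -1 - 1) with 0 by ring. replace (/ -1) with (-1) by field.
    replace (-1 + 1) with 0 by ring. unfold Rdiv. rewrite Rinv_0. ring.
  - field. split; [exact Hu | lra].
Qed.

(* Of [S (x, y)], we call [(x + 1, y / (1 - y))] the shift and [(1 - x, - y / (y + 1))] the
   refl; the auxiliary points [(- x / (x + 1), 1 - y)] and [(x / (1 - x), y + 1)] are the flip
   and the glide of [(x, y)]. *)
Section Conjugacy.

Variables a b : R.
Hypotheses (Hab : a < b) (Hb : b <= 1) (Hab1 : 1 < a + b).

Lemma S_TT_same x y :
  (x <> 0 -> y + digit a x <> 0) -> S (TT a (x, y)) (TT b (x, y)).
Proof.
  intros Hy. destruct (Req_dec x 0) as [->|Hx].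
  - rewrite !TT_0. now left.
  - specialize (Hy Hx). rewrite !TT_neq0 by exact Hx.
    pose proof (digit_spec a x). destruct (digit_integer a x) as [D HD]. rewrite HD in *.
    destruct (Rle_dec (b - 1) (/ x - IZR D)).
    + rewrite (digit_eq b x D) by lra. now left.
    + rewrite (digit_eq b x (D - 1)) by (rewrite minus_IZR; lra).
      right; right; left. rewrite minus_IZR. f_equal; [ring|].
      rewrite <- inv_pred_eq by exact Hy. f_equal. ring.
Qed.

Lemma S_TT_opp x y :
  (x <> 0 -> y + digit a x <> 0) -> S (TT a (x, y)) (TT b (- x, - y)).
Proof.
  intros Hy. destruct (Req_dec x 0) as [->|Hx].
  - rewrite Ropp_0, !TT_0. now left.
  - specialize (Hy Hx). rewrite !TT_neq0 by lra. rewrite Rinv_opp.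
    pose proof (digit_spec a x). destruct (digit_integer a x) as [D HD]. rewrite HD in *.
    destruct (Rle_dec (/ x - IZR D) (1 - b)).
    + rewrite (digit_eq b (- x) (- D)) by (rewrite Rinv_opp, opp_IZR; lra).
      right; left. rewrite opp_IZR. f_equal; [ring|].
      rewrite <- Rinv_opp. f_equal. ring.
    + rewrite (digit_eq b (- x) (- D - 1)) by (rewrite Rinv_opp, minus_IZR, opp_IZR; lra).
      right; right; right. rewrite minus_IZR, opp_IZR. f_equal; [ring|].
      rewrite <- inv_opp_pred_eq by exact Hy. f_equal. ring.
Qed.

Lemma S_TT_flip x y : x <> -1 ->
  (x <> 0 -> y + digit a x <> 0) -> S (TT a (x, y)) (TT b (- x / (x + 1), 1 - y)).
Proof.
  intros Hx1 Hy. destruct (Req_dec x 0) as [->|Hx].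
  - replace (- 0 / (0 + 1)) with 0 by field. rewrite !TT_0. now left.
  - specialize (Hy Hx).
    assert (Hinv : / (- x / (x + 1)) = - / x - 1) by (field; split; lra).
    assert (Hflip : - x / (x + 1) <> 0).
    { apply Rmult_integral_contrapositive. split; [lra | apply Rinv_neq_0_compat; lra]. }
    rewrite !TT_neq0 by assumption. rewrite Hinv.
    pose proof (digit_spec a x). destruct (digit_integer a x) as [D HD]. rewrite HD in *.
    destruct (Rle_dec (/ x - IZR D) (1 - b)).
    + rewrite (digit_eq b _ (- D - 1)) by (rewrite Hinv, minus_IZR, opp_IZR; lra).
      right; left. rewrite minus_IZR, opp_IZR. f_equal; [ring|].
      rewrite <- Rinv_opp. f_equal. ring.
    + rewrite (digit_eq b _ (- D - 2)) by (rewrite Hinv, minus_IZR, opp_IZR; lra).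
      right; right; right. rewrite minus_IZR, opp_IZR. f_equal; [ring|].
      rewrite <- inv_opp_pred_eq by exact Hy. f_equal. ring.
Qed.

End Conjugacy.

Lemma TT_glide b x y : x <> 0 -> x <> 1 -> TT b (x / (1 - x), y + 1) = TT b (x, y).
Proof.
  intros Hx Hx1. assert (Hv : x / (1 - x) <> 0).
  { apply Rmult_integral_contrapositive. split; [lra | apply Rinv_neq_0_compat; lra]. }
  assert (Hinv : / (x / (1 - x)) = / x - 1) by (field; split; lra).
  rewrite !TT_neq0 by assumption.
  pose proof (digit_spec b x). destruct (digit_integer b x) as [E HE]. rewrite HE in *.
  rewrite (digit_eq b _ (E - 1)) by (rewrite Hinv, minus_IZR; lra).
  rewrite Hinv, minus_IZR. f_equal; [ring | f_equal; ring].
Qed.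

Lemma TT_refl_digit1 a b x y : 0 < x < 1 -> y <> -1 -> digit a x = 1 ->
  TT b (1 - x, - y / (y + 1)) = TT b (TT a (x, y)).
Proof.
  intros Hx Hy Hd. rewrite (TT_neq0 a), Hd by lra.
  assert (Hx1 : / x - 1 <> 0).
  { assert (1 < / x) by (rewrite <- Rinv_1; apply Rinv_lt_contravar; lra). lra. }
  assert (Hinv : / (1 - x) = 1 + / (/ x - 1)) by (field; repeat split; lra).
  rewrite !TT_neq0 by lra.
  pose proof (digit_spec b (/ x - 1)). destruct (digit_integer b (/ x - 1)) as [E HE].
  rewrite HE in *.
  rewrite (digit_eq b _ (E + 1)) by (rewrite Hinv, plus_IZR; lra).
  rewrite Hinv, plus_IZR. f_equal; [ring | f_equal; field; lra].
Qed.

Lemma TT_refl_glide b x y : 0 < x < 1 -> y <> -1 -> b <= 1 -> x / (1 - x) < b ->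
  TT b (1 - x, - y / (y + 1)) = (x / (1 - x), y + 1).
Proof.
  intros Hx Hy Hb Hv. rewrite TT_neq0 by lra.
  assert (Hinv : / (1 - x) = 1 + x / (1 - x)) by (field; lra).
  assert (0 < x / (1 - x)) by (apply Rdiv_lt_0_compat; lra).
  rewrite (digit_eq b _ 1) by (rewrite Hinv; lra).
  f_equal; [rewrite Hinv; ring | field; lra].
Qed.

Lemma TT_refl_flip b x y : 0 < x < 1 -> y <> -1 -> y <> -2 -> b <= x / (1 - x) < 1 + b ->
  TT b (1 - x, - y / (y + 1)) = (- (/ x - 2) / (/ x - 2 + 1), 1 - / (y + 2)).
Proof.
  intros Hx Hy Hy2 Hv. rewrite TT_neq0 by lra.
  assert (Hinv : / (1 - x) = 1 + x / (1 - x)) by (field; lra).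
  rewrite (digit_eq b _ 2) by (rewrite Hinv; lra).
  f_equal; field; lra.
Qed.

Lemma TT_shift_flip a b x y : g <= a -> a <= x + 1 < b -> b <= 1 -> y <> 1 ->
  TT b (x + 1, y / (1 - y)) = (- x / (x + 1), 1 - y).
Proof.
  intros Ha Hx Hb Hy. destruct (golden_bounds a Ha).
  rewrite TT_neq0 by lra.
  assert (1 < / (x + 1)) by (rewrite <- Rinv_1; apply Rinv_lt_contravar; lra).
  assert (/ (x + 1) <= / a) by (apply Rinv_le_contravar; lra).
  assert (/ a <= 1 + a) by (assert (a * / a = 1) by (field; lra); nra).
  rewrite (digit_eq b _ 1) by lra.
  f_equal; field; lra.
Qed.

Lemma digit_pos_ge a x : 0 < a <= 1 -> 0 < x <= a -> 1 <= digit a x.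
Proof.
  intros Ha Hx. pose proof (digit_spec a x). destruct (digit_integer a x) as [D HD].
  rewrite HD in *.
  assert (1 <= / x) by (rewrite <- Rinv_1; apply Rinv_le_contravar; lra).
  assert (HD0 : 0 < IZR D) by lra. apply lt_IZR in HD0. apply IZR_le. lia.
Qed.

Lemma digit_small_ge a x : 0 <= a -> 0 < x <= / (2 + a) -> 3 <= digit a x.
Proof.
  intros Ha Hx. pose proof (digit_spec a x). destruct (digit_integer a x) as [D HD].
  rewrite HD in *.
  assert (2 + a <= / x).
  { rewrite <- (Rinv_inv (2 + a)). apply Rinv_le_contravar; lra. }
  assert (HD2 : 2 < IZR D) by lra. apply lt_IZR in HD2. apply IZR_le. lia.
Qed.

Lemma digit_neg_le a x : g <= a -> a - 1 <= x < 0 -> digit a x <= -3.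
Proof.
  intros Ha Hx. destruct (golden_bounds a Ha).
  pose proof (digit_spec a x). destruct (digit_integer a x) as [D HD]. rewrite HD in *.
  assert (/ x < 0) by (apply Rinv_neg; lra).
  assert (x * / x = 1) by (field; lra).
  assert (1 <= / x * (a - 1)) by nra.
  (* [a^2 - 4a + 2 < 0], i.e. [a > 2 - sqrt 2], is what makes [1/x + 3 - a] negative. *)
  assert (/ x + 3 - a < 0) by nra.
  assert (HD3 : IZR D < -2) by lra. apply lt_IZR in HD3. apply IZR_le. lia.
Qed.

Definition closed2 (P : R * R -> Prop) : Prop :=
  forall (A : R * R -> Prop) p, (forall q, A q -> P q) -> closure2 A p -> P p.

Lemma closed2_and P Q : closed2 P -> closed2 Q -> closed2 (fun q => P q /\ Q q).
Proof.
  intros HP HQ A p HA Hc. split; [apply (HP A) | apply (HQ A)]; firstorder.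
Qed.

Lemma closed2_or P Q : closed2 P -> closed2 Q -> closed2 (fun q => P q \/ Q q).
Proof.
  intros HP HQ A p HA Hc.
  destruct (classic (closure2 (fun q => A q /\ P q) p)) as [HcP|HcP].
  { left. apply (HP (fun q => A q /\ P q)); [tauto | exact HcP]. }
  destruct (classic (closure2 (fun q => A q /\ Q q) p)) as [HcQ|HcQ].
  { right. apply (HQ (fun q => A q /\ Q q)); [tauto | exact HcQ]. }
  exfalso. unfold closure2 in HcP, HcQ.
  apply not_all_ex_not in HcP as [e1 He1]. apply not_all_ex_not in HcQ as [e2 He2].
  apply imply_to_and in He1 as [He1 Hno1]. apply imply_to_and in He2 as [He2 Hno2].
  destruct (Hc (Rmin e1 e2)) as [q [Aq [Hq1 Hq2]]]; [now apply Rmin_glb_lt|].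
  pose proof (Rmin_l e1 e2). pose proof (Rmin_r e1 e2).
  destruct (HA q Aq) as [Pq|Qq].
  - apply Hno1. exists q. repeat split; auto; lra.
  - apply Hno2. exists q. repeat split; auto; lra.
Qed.

Lemma closed2_fst_le c : closed2 (fun q => fst q <= c).
Proof.
  intros A p HA Hc. apply Rnot_lt_le. intros Hp.
  destruct (Hc (fst p - c)) as [q [Aq [Hq _]]]; [lra|].
  apply HA in Aq. apply Rabs_def2 in Hq. lra.
Qed.

Lemma closed2_le_fst c : closed2 (fun q => c <= fst q).
Proof.
  intros A p HA Hc. apply Rnot_lt_le. intros Hp.
  destruct (Hc (c - fst p)) as [q [Aq [Hq _]]]; [lra|].
  apply HA in Aq. apply Rabs_def2 in Hq. lra.
Qed.

Lemma closed2_snd_le c : closed2 (fun q => snd q <= c).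
Proof.
  intros A p HA Hc. apply Rnot_lt_le. intros Hp.
  destruct (Hc (snd p - c)) as [q [Aq [_ Hq]]]; [lra|].
  apply HA in Aq. apply Rabs_def2 in Hq. lra.
Qed.

Lemma closed2_le_snd c : closed2 (fun q => c <= snd q).
Proof.
  intros A p HA Hc. apply Rnot_lt_le. intros Hp.
  destruct (Hc (c - snd p)) as [q [Aq [_ Hq]]]; [lra|].
  apply HA in Aq. apply Rabs_def2 in Hq. lra.
Qed.

(* It keeps [y + digit a x] away from [0], and [y] away from [1] when [x < 0]. *)
Definition envelope (a : R) (p : R * R) : Prop :=
  a - 1 <= fst p /\ fst p <= a /\ 1 - sqrt 2 <= snd p /\ snd p <= sqrt 2 /\
  (0 <= fst p \/ snd p <= 2 - sqrt 2) /\
  (sqrt 2 / 2 - 1 <= snd p \/ fst p <= / (2 + a)).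

Section Envelope.

Variable a : R.
Hypotheses (Ha : g <= a) (Ha1 : a <= 1).

Lemma envelope_axis x : a - 1 <= x <= a -> envelope a (x, 0).
Proof.
  intros Hx. destruct sqrt2_bounds. unfold envelope; simpl. repeat split; lra.
Qed.

Lemma envelope_digit_neq0 x y : envelope a (x, y) -> x <> 0 -> y + digit a x <> 0.
Proof.
  intros (Hx1 & Hx2 & Hy1 & Hy2 & _) Hx. cbn [fst snd] in *. destruct sqrt2_bounds.
  destruct (golden_bounds a Ha). destruct (Rlt_dec x 0).
  - pose proof (digit_neg_le a x Ha ltac:(lra)). lra.
  - pose proof (digit_pos_ge a x ltac:(lra) ltac:(lra)). lra.
Qed.

Lemma envelope_TT_neg x y : envelope a (x, y) -> x < 0 -> envelope a (TT a (x, y)).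
Proof.
  intros (Hx1 & Hx2 & Hy1 & Hy2 & Hy3 & _) Hx. cbn [fst snd] in *.
  destruct sqrt2_bounds. destruct (golden_bounds a Ha).
  assert (Hy : y <= 2 - sqrt 2) by (destruct Hy3; lra).
  pose proof (digit_neg_le a x Ha ltac:(lra)) as HD3.
  rewrite TT_neq0 by lra.
  pose proof (digit_spec a x). destruct (digit_integer a x) as [D HD]. rewrite HD in *.
  assert (/ (y + IZR D) < 0) by (apply Rinv_neg; lra).
  assert ((y + IZR D) * / (y + IZR D) = 1) by (field; lra).
  set (w := / (y + IZR D)) in *.
  assert (1 - sqrt 2 <= w) by nra.
  unfold envelope; simpl. repeat split; try lra.
  destruct (Rle_dec (sqrt 2 / 2 - 1) w) as [|Hw]; [now left | right].
  assert (HD4 : -4 < IZR D) by nra. apply lt_IZR in HD4. apply le_IZR in HD3.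
  replace D with (-3)%Z in * by lia.
  assert (/ x < 0) by (apply Rinv_neg; lra).
  assert (x * / x = 1) by (field; lra).
  assert ((/ x + 3) * (1 - a) <= 2 - 3 * a) by nra.
  (* uses [a^2 + a >= 1], with equality at [a = g]: this is where [g <= a] is sharp *)
  assert ((/ x + 3) * (2 + a) <= 1) by nra.
  apply (Rmult_le_reg_r (2 + a)); [lra|]. rewrite Rinv_l by lra. simpl. lra.
Qed.

Lemma envelope_TT_pos x y : envelope a (x, y) -> 0 < x -> envelope a (TT a (x, y)).
Proof.
  intros (Hx1 & Hx2 & Hy1 & Hy2 & _ & Hy4) Hx. cbn [fst snd] in *.
  destruct sqrt2_bounds. destruct (golden_bounds a Ha).
  pose proof (digit_pos_ge a x ltac:(lra) ltac:(lra)) as HD1.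
  assert (Hy : sqrt 2 / 2 - 1 <= y \/ 3 <= digit a x).
  { destruct Hy4; [now left | right; apply digit_small_ge; lra]. }
  rewrite TT_neq0 by lra.
  pose proof (digit_spec a x). destruct (digit_integer a x) as [D HD]. rewrite HD in *.
  assert (1 <= / x) by (rewrite <- Rinv_1; apply Rinv_le_contravar; lra).
  assert (0 < / (y + IZR D)) by (apply Rinv_0_lt_compat; lra).
  assert ((y + IZR D) * / (y + IZR D) = 1) by (field; lra).
  set (w := / (y + IZR D)) in *.
  unfold envelope; simpl. repeat split; try lra.
  - destruct Hy; nra.
  - destruct (Rle_dec 0 (/ x - IZR D)) as [|Hneg]; [now left | right].
    assert (HD2 : 1 < IZR D) by lra. apply lt_IZR in HD2.
    assert (HD2' : 2 <= IZR D) by (apply IZR_le; lia).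
    destruct Hy; nra.
Qed.

Lemma envelope_TTn n p : envelope a p -> envelope a (TTn a n p).
Proof.
  intros Hp. induction n as [|n IH]; [exact Hp|]. rewrite TTn_S.
  destruct (TTn a n p) as [x y]. destruct (Rtotal_order x 0) as [Hx|[->|Hx]].
  - now apply envelope_TT_neg.
  - rewrite TT_0. apply envelope_axis. destruct (golden_bounds a Ha). lra.
  - now apply envelope_TT_pos.
Qed.

Lemma envelope_closed : closed2 (envelope a).
Proof.
  unfold envelope. repeat apply closed2_and;
    repeat first [ apply closed2_fst_le | apply closed2_le_fst | apply closed2_snd_le
                 | apply closed2_le_snd | apply closed2_or ].
Qed.

Lemma Omega_envelope p : Omega a p -> envelope a p.
Proof.
  intros [n Hc]. apply (envelope_closed (image_n a n)); [|exact Hc].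
  intros q [x0 [Hx0 ->]]. apply envelope_TTn, envelope_axis. lra.
Qed.

End Envelope.

Lemma skip_bound y k : 1 - sqrt 2 <= y <= sqrt 2 -> 1 <= k <= 2 -> 1 - 1 / sqrt 2 <= / (y + k).
Proof.
  intros Hy Hk. destruct sqrt2_bounds.
  replace (1 - 1 / sqrt 2) with (/ (sqrt 2 + 2)).
  - apply Rinv_le_contravar; lra.
  - field_simplify_eq; [nra | lra].
Qed.

Definition reaches (b : R) (q p : R * R) : Prop :=
  exists k, (1 <= k)%nat /\ S p (TTn b k q).

Lemma reaches_TT1 b q p : S p (TT b q) -> reaches b q p.
Proof. intros H. exists 1%nat. split; [lia | exact H]. Qed.

Lemma reaches_TT2 b q p : S p (TT b (TT b q)) -> reaches b q p.
Proof. intros H. exists 2%nat. split; [lia | exact H]. Qed.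

Lemma reaches_iterate b k q p : reaches b (TTn b k q) p -> reaches b q p.
Proof.
  intros [j [Hj HS]]. exists (j + k)%nat. split; [lia|]. now rewrite TTn_add.
Qed.

Section Matching.

Variables a b : R.
Hypotheses (Ha : g <= a) (Hab : a < b) (Hb : b <= 1).

Lemma S_TT_same_envelope p : envelope a p -> S (TT a p) (TT b p).
Proof.
  destruct p as [x y]. intros Hp. destruct (golden_bounds a Ha).
  apply S_TT_same; try lra. now apply envelope_digit_neq0; try lra.
Qed.

Lemma digit_two_of_refl x : 0 < x -> 2 <= digit a x -> b <= x / (1 - x) ->
  digit a x = 2 /\ x / (1 - x) < 1 + b.
Proof.
  intros Hx HD2 Hv. destruct (golden_bounds a Ha).
  pose proof (digit_spec a x). destruct (digit_integer a x) as [D HD]. rewrite HD in *.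
  assert (x * / x = 1) by (field; lra).
  assert (Hx1 : x < 1) by nra.
  assert (b * (1 - x) <= x).
  { apply (Rmult_le_compat_r (1 - x)) in Hv; [|lra].
    unfold Rdiv in Hv. rewrite Rmult_assoc, Rinv_l in Hv by lra. lra. }
  assert (HD3 : IZR D < 3).
  { apply Rnot_le_lt. intros HD3.
    (* [x <= 1/(2+a)] and [x >= b/(1+b)] would give [b (1+a) <= 1 < a (1+a)] *)
    assert (x * (2 + a) <= 1) by nra. nra. }
  apply lt_IZR in HD3. apply le_IZR in HD2. replace D with 2%Z in * by lia.
  split; [reflexivity|].
  assert (x * (1 + a) <= 1) by nra.
  apply (Rmult_lt_reg_r (1 - x)); [lra|].
  unfold Rdiv. rewrite Rmult_assoc, Rinv_l by lra. nra.
Qed.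

Lemma reaches_TT_shift x y : envelope a (x, y) -> b - 1 <= x + 1 < b ->
  reaches b (x + 1, y / (1 - y)) (TT a (x, y)).
Proof.
  intros Hp Hq. pose proof Hp as (Hx1 & Hx2 & Hy1 & Hy2 & Hy3 & _). cbn [fst snd] in *.
  destruct sqrt2_bounds. destruct (golden_bounds a Ha).
  assert (Hy : y <= 2 - sqrt 2) by (destruct Hy3; lra).
  apply reaches_TT2. rewrite (TT_shift_flip a b) by lra.
  apply S_TT_flip; try lra. now apply envelope_digit_neq0; try lra.
Qed.

Lemma reaches_TT_refl x y : envelope a (x, y) -> b - 1 <= 1 - x < b ->
  reaches b (1 - x, - y / (y + 1)) (TT a (x, y)) \/
  (1 - 1 / sqrt 2 <= snd (TT a (x, y)) /\
   reaches b (1 - x, - y / (y + 1)) (TT a (TT a (x, y)))).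
Proof.
  intros Hp Hq. pose proof Hp as (Hx1 & Hx2 & Hy1 & Hy2 & _). cbn [fst snd] in *.
  destruct sqrt2_bounds. destruct (golden_bounds a Ha).
  assert (Hx : 0 < x) by lra.
  assert (HTT : envelope a (TT a (x, y))) by (apply envelope_TT_pos; auto; lra).
  pose proof (digit_pos_ge a x ltac:(lra) ltac:(lra)) as HD1.
  pose proof (digit_spec a x). destruct (digit_integer a x) as [D HD].
  destruct (Z.eq_dec D 1) as [->|HD1'].
  - right. split.
    + rewrite TT_neq0, HD by lra. apply skip_bound; lra.
    + apply reaches_TT1. rewrite (TT_refl_digit1 a) by (auto; lra).
      now apply S_TT_same_envelope.
  - assert (HD2 : 2 <= digit a x).
    { rewrite HD in *. apply le_IZR in HD1. apply IZR_le. lia. }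
    destruct (Rlt_dec (x / (1 - x)) b) as [Hv|Hv].
    + left. apply reaches_TT2. rewrite TT_refl_glide, TT_glide by lra.
      now apply S_TT_same_envelope.
    + destruct (digit_two_of_refl x Hx HD2 ltac:(lra)) as [HD' Hv'].
      rewrite TT_neq0, HD' in HTT by lra.
      right. split.
      * rewrite TT_neq0, HD' by lra. apply skip_bound; lra.
      * apply reaches_TT2. rewrite TT_refl_flip by lra. rewrite (TT_neq0 a x), HD' by lra.
        apply S_TT_flip; try lra.
        now apply envelope_digit_neq0; try lra.
Qed.

Lemma reaches_TT p q : envelope a p -> S p q -> b - 1 <= fst q < b ->
  reaches b q (TT a p) \/
  (1 - 1 / sqrt 2 <= snd (TT a p) /\ reaches b q (TT a (TT a p))).
Proof.
  destruct p as [x y]. intros Hp Hq Hr. destruct (golden_bounds a Ha).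
  destruct Hq as [-> | [-> | [-> | ->]]]; cbn [fst] in Hr.
  - left. apply reaches_TT1. now apply S_TT_same_envelope.
  - left. apply reaches_TT1. apply S_TT_opp; try lra. now apply envelope_digit_neq0; try lra.
  - left. now apply reaches_TT_shift.
  - now apply reaches_TT_refl.
Qed.

Lemma reaches_TTn m p q : envelope a p -> S p q -> b - 1 <= fst q < b ->
  reaches b q (TT a (TTn a m p)) \/
  (1 - 1 / sqrt 2 <= snd (TT a (TTn a m p)) /\ reaches b q (TT a (TT a (TTn a m p)))).
Proof.
  intros Hp Hq Hr. induction m as [|m IH]; [exact (reaches_TT p q Hp Hq Hr)|].
  destruct IH as [[k [Hk HS]] | [_ Hnext]]; [|now left].
  destruct (golden_bounds a Ha).
  destruct (reaches_TT (TT a (TTn a m p)) (TTn b k q)) as [Hreach | [Hc Hreach]].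
  - rewrite <- TTn_S. apply envelope_TTn; auto; lra.
  - exact HS.
  - apply fst_TTn_range; auto; lra.
  - left. exact (reaches_iterate b k q _ Hreach).
  - right. split; [exact Hc | exact (reaches_iterate b k q _ Hreach)].
Qed.

End Matching.

Theorem lemma4p4 (alpha beta x y xt yt : R) (n : nat) :
  g <= alpha -> alpha < beta -> beta <= 1 ->
  Omega alpha (x, y) ->
  S (x, y) (xt, yt) ->
  (1 <= n)%nat ->
  beta - 1 <= xt < beta ->
  snd (TTn alpha n (x, y)) < 1 - 1 / sqrt 2 ->
  exists k : nat, (1 <= k)%nat /\
    S (TTn alpha n (x, y)) (TTn beta k (xt, yt)).
Proof.
  intros Ha Hab Hb HO HS Hn Hxt Hyn.
  destruct n as [|m]; [lia|].
  assert (Hxy : envelope alpha (x, y)) by (apply Omega_envelope; auto; lra).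
  destruct (reaches_TTn alpha beta Ha Hab Hb m (x, y) (xt, yt) Hxy HS Hxt) as [H | [Hc _]].
  - exact H.
  - rewrite TTn_S in Hyn. exfalso. lra.
Qed.
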